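(* Let $P=\{p_1,\dots,p_n\}$ be weighted points in $\mathbb{R}^2$ with total weight $1$, let $S=\{s_1,\dots,s_m\}$ be triangles in $\mathbb{R}^2$ of total area $1$ with longest edge length $\Delta$, let $\delta>0$, and let $Q$ be the set of cells produced by the subdivision described in the context. Then $|Q|=O\!\left(\frac{nm}{\delta^2}\log\frac{nm\Delta}{\delta}\right)$.
   Context: Subdivision: overlay a uniform grid of $\Delta\times\Delta$ square cells and keep the cells that intersect a triangle of $S$. Recursively process each cell: if there is a point of $P$ such that the whole cell lies within Euclidean distance $\delta/\sqrt{nm}$ of it, stop; otherwise, if for some point of $P$ the ratio of the distances to the furthest and closest point of the cell exceeds $1+\delta$, split the cell into four equal squares and recurse; otherwise stop. $Q$ is the set of resulting cells. *)

From Stdlib Require Import Reals Lra ZArith List.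
Open Scope R_scope.

Definition pt : Type := (R * R)%type.

Definition dist (p q : pt) : R :=
  sqrt ((fst p - fst q) ^ 2 + (snd p - snd q) ^ 2).

Definition sumR (k : nat) (f : nat -> R) : R :=
  fold_right Rplus 0 (map f (seq 0 k)).

Definition tri : Type := (pt * pt * pt)%type.

Definition tA (t : tri) : pt := fst (fst t).
Definition tB (t : tri) : pt := snd (fst t).
Definition tC (t : tri) : pt := snd t.

Definition in_triangle (t : tri) (x : pt) : Prop :=
  exists a b c : R, 0 <= a /\ 0 <= b /\ 0 <= c /\ a + b + c = 1 /\
    fst x = a * fst (tA t) + b * fst (tB t) + c * fst (tC t) /\
    snd x = a * snd (tA t) + b * snd (tB t) + c * snd (tC t).

Definition tri_area (t : tri) : R :=
  Rabs ((fst (tB t) - fst (tA t)) * (snd (tC t) - snd (tA t))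
        - (snd (tB t) - snd (tA t)) * (fst (tC t) - fst (tA t))) / 2.

Definition longest_edge (t : tri) : R :=
  Rmax (dist (tA t) (tB t)) (Rmax (dist (tB t) (tC t)) (dist (tC t) (tA t))).

(* Dyadic cells: (k, a, b) denotes the closed square
   [a*s, (a+1)*s] x [b*s, (b+1)*s] with s = Delta / 2^k.
   Depth 0 cells are the cells of the uniform Delta x Delta grid
   (aligned with the origin); the four children of (k,a,b) are
   (k+1, 2a+e, 2b+f), e,f in {0,1}. *)
Definition cell : Type := (nat * Z * Z)%type.

Definition cdepth (c : cell) : nat := fst (fst c).
Definition cx (c : cell) : Z := snd (fst c).
Definition cy (c : cell) : Z := snd c.

Definition cside (Delta : R) (c : cell) : R := Delta / 2 ^ (cdepth c).

Definition in_cell (Delta : R) (c : cell) (x : pt) : Prop :=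
  IZR (cx c) * cside Delta c <= fst x <= (IZR (cx c) + 1) * cside Delta c /\
  IZR (cy c) * cside Delta c <= snd x <= (IZR (cy c) + 1) * cside Delta c.

(* the ancestor of c that is j levels up (j <= depth c) *)
Definition ancestor (c : cell) (j : nat) : cell :=
  ((cdepth c - j)%nat, (cx c / 2 ^ Z.of_nat j)%Z, (cy c / 2 ^ Z.of_nat j)%Z).

Definition near_stop (n m : nat) (P : nat -> pt) (delta Delta : R) (c : cell) : Prop :=
  exists i, (i < n)%nat /\
    forall x, in_cell Delta c x -> dist x (P i) <= delta / sqrt (INR n * INR m).

(* For some point p of P, (furthest distance from p to the cell) exceeds
   (1+delta) * (closest distance from p to the cell).  Since the cell is a
   closed square these extrema are attained, so this says that some point y
   of the cell is more than (1+delta) times further from p than some point x. *)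
Definition ratio_big (n : nat) (P : nat -> pt) (delta Delta : R) (c : cell) : Prop :=
  exists i, (i < n)%nat /\
    exists x y, in_cell Delta c x /\ in_cell Delta c y /\
      dist y (P i) > (1 + delta) * dist x (P i).

Definition splits (n m : nat) (P : nat -> pt) (delta Delta : R) (c : cell) : Prop :=
  ~ near_stop n m P delta Delta c /\ ratio_big n P delta Delta c.

Definition kept (m : nat) (S : nat -> tri) (Delta : R) (c : cell) : Prop :=
  cdepth c = 0%nat /\
  exists t x, (t < m)%nat /\ in_triangle (S t) x /\ in_cell Delta c x.

(* c is a resulting cell of the subdivision (a leaf of the recursion) *)
Definition inQ (n m : nat) (P : nat -> pt) (S : nat -> tri) (delta Delta : R)
  (c : cell) : Prop :=
  kept m S Delta (ancestor c (cdepth c)) /\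
  (forall j, (1 <= j <= cdepth c)%nat -> splits n m P delta Delta (ancestor c j)) /\
  ~ splits n m P delta Delta c.

(* A cell of Q of depth 0 is a grid cell meeting some triangle.  Every point of a triangle
   is within Δ of its first vertex in each coordinate, so the corner of such a cell lies in a
   5 × 5 block of grid cells around that vertex.  A cell of side s and depth d + 1 has a parent
   of side 2s that was split: some p ∈ P sees two points x, y of the parent with
   |yp| > (1 + δ)|xp|, and |yp| ≤ |xp| + 4s, so the whole parent lies within 8s/δ of p.  The
   corner of the cell then lies in a K × K block (K ≈ 16/δ) of its level of the grid around p,
   and since the parent was not stopped, δ/√(nm) < 8s/δ, which bounds 2^d by (nmΔ/δ)^6.
   Hence |Q| ≤ 25m + n J K² with J = O(log(nmΔ/δ)) and K = O(1/δ); unit total area forces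
   mΔ² ≥ 2, so log(nmΔ/δ) ≥ 1/4 and the term 25m is absorbed. *)

From Stdlib Require Import Reals List Lra Lia ZArith.
Open Scope R_scope.

Lemma dist_dist_euc (p q : pt) : dist p q = dist_euc (fst p) (snd p) (fst q) (snd q).
Proof. unfold dist, dist_euc, Rsqr. f_equal. ring. Qed.

Lemma dist_triangle (p q r : pt) : dist p r <= dist p q + dist q r.
Proof. rewrite !dist_dist_euc. apply triangle. Qed.

Lemma dist_sym (p q : pt) : dist p q = dist q p.
Proof. unfold dist. f_equal. ring. Qed.

Lemma dist_ge0 (p q : pt) : 0 <= dist p q.
Proof. apply sqrt_pos. Qed.

Lemma dist_sq (p q : pt) :
  dist p q ^ 2 = (fst p - fst q) ^ 2 + (snd p - snd q) ^ 2.
Proof.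
  apply pow2_sqrt.
  pose proof (pow2_ge_0 (fst p - fst q)); pose proof (pow2_ge_0 (snd p - snd q)); lra.
Qed.

Lemma dist_sq_le (p q : pt) (D : R) :
  dist p q <= D -> (fst p - fst q) ^ 2 + (snd p - snd q) ^ 2 <= D ^ 2.
Proof. intros Hpq. rewrite <- dist_sq. apply pow_incr. split; [apply dist_ge0 | exact Hpq]. Qed.

Lemma Rabs_le_of_sq_le (z D : R) : 0 <= D -> z ^ 2 <= D ^ 2 -> Rabs z <= D.
Proof. intros HD Hz. apply Rabs_le. split; nra. Qed.

Lemma Rabs_fst_le_dist (p q : pt) : Rabs (fst p - fst q) <= dist p q.
Proof.
  apply Rabs_le_of_sq_le; [apply dist_ge0|]. rewrite dist_sq.
  pose proof (pow2_ge_0 (snd p - snd q)); lra.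
Qed.

Lemma Rabs_snd_le_dist (p q : pt) : Rabs (snd p - snd q) <= dist p q.
Proof.
  apply Rabs_le_of_sq_le; [apply dist_ge0|]. rewrite dist_sq.
  pose proof (pow2_ge_0 (fst p - fst q)); lra.
Qed.

Lemma in_cell_dist_le (D : R) (c : cell) (x y : pt) :
  in_cell D c x -> in_cell D c y -> dist x y <= 2 * cside D c.
Proof.
  unfold in_cell. set (s := cside D c). intros [Hx1 Hx2] [Hy1 Hy2].
  assert (Hs : 0 <= s) by nra.
  unfold dist. rewrite <- (sqrt_pow2 (2 * s)) by lra. apply sqrt_le_1_alt. nra.
Qed.

Lemma Rabs_sub_triang (x y z : R) : Rabs (x - z) <= Rabs (x - y) + Rabs (y - z).
Proof. replace (x - z) with ((x - y) + (y - z)) by ring. apply Rabs_triang. Qed.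

Lemma dist_AB_le_longest_edge (t : tri) : dist (tA t) (tB t) <= longest_edge t.
Proof. apply Rmax_l. Qed.

Lemma dist_CA_le_longest_edge (t : tri) : dist (tC t) (tA t) <= longest_edge t.
Proof. eapply Rle_trans; [|apply Rmax_r]. apply Rmax_r. Qed.

Lemma convex_comb_near (xA xB xC x a b c D : R) :
  0 <= a -> 0 <= b -> 0 <= c -> a + b + c = 1 -> x = a * xA + b * xB + c * xC ->
  Rabs (xB - xA) <= D -> Rabs (xC - xA) <= D -> Rabs (x - xA) <= D.
Proof.
  intros Ha Hb Hc Habc -> HB HC.
  replace (a * xA + b * xB + c * xC - xA) with (b * (xB - xA) + c * (xC - xA)) by
    (replace a with (1 - b - c) by lra; ring).
  eapply Rle_trans; [apply Rabs_triang|].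
  rewrite !Rabs_mult, (Rabs_pos_eq b), (Rabs_pos_eq c) by lra.
  pose proof (Rmult_le_compat_l b _ _ Hb HB).
  pose proof (Rmult_le_compat_l c _ _ Hc HC).
  pose proof (Rabs_pos (xB - xA)). nra.
Qed.

Lemma in_triangle_near_vertex (t : tri) (x : pt) (D : R) :
  longest_edge t <= D -> in_triangle t x ->
  Rabs (fst x - fst (tA t)) <= D /\ Rabs (snd x - snd (tA t)) <= D.
Proof.
  intros Ht (a & b & c & Ha & Hb & Hc & Habc & Hx & Hy).
  assert (HAB := dist_AB_le_longest_edge t). assert (HCA := dist_CA_le_longest_edge t).
  rewrite dist_sym in HAB.
  split.
  - apply (convex_comb_near _ (fst (tB t)) (fst (tC t)) _ a b c); try assumption;
      apply (Rle_trans _ _ _ (Rabs_fst_le_dist _ _)); lra.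
  - apply (convex_comb_near _ (snd (tB t)) (snd (tC t)) _ a b c); try assumption;
      apply (Rle_trans _ _ _ (Rabs_snd_le_dist _ _)); lra.
Qed.

Lemma tri_area_le (t : tri) (D : R) : longest_edge t <= D -> tri_area t <= D ^ 2 / 2.
Proof.
  intros Ht.
  assert (HAB : dist (tB t) (tA t) <= D)
    by (rewrite dist_sym; exact (Rle_trans _ _ _ (dist_AB_le_longest_edge t) Ht)).
  assert (HCA : dist (tC t) (tA t) <= D)
    by exact (Rle_trans _ _ _ (dist_CA_le_longest_edge t) Ht).
  assert (HD : 0 <= D) by (pose proof (dist_ge0 (tB t) (tA t)); lra).
  apply dist_sq_le in HAB, HCA.
  unfold tri_area.
  set (u1 := fst (tB t) - fst (tA t)) in *. set (u2 := snd (tB t) - snd (tA t)) in *.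
  set (v1 := fst (tC t) - fst (tA t)) in *. set (v2 := snd (tC t) - snd (tA t)) in *.
  assert (Lagrange : (u1 * v2 - u2 * v1) ^ 2 + (u1 * v1 + u2 * v2) ^ 2
                     = (u1 ^ 2 + u2 ^ 2) * (v1 ^ 2 + v2 ^ 2)) by ring.
  assert (Hdet : Rabs (u1 * v2 - u2 * v1) <= D ^ 2).
  { apply Rabs_le_of_sq_le; [apply pow2_ge_0|].
    pose proof (pow2_ge_0 (u1 * v1 + u2 * v2)).
    pose proof (pow2_ge_0 u1); pose proof (pow2_ge_0 u2).
    pose proof (pow2_ge_0 v1); pose proof (pow2_ge_0 v2).
    replace ((D ^ 2) ^ 2) with (D ^ 2 * D ^ 2) by ring.
    assert ((u1 ^ 2 + u2 ^ 2) * (v1 ^ 2 + v2 ^ 2) <= D ^ 2 * D ^ 2)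
      by (apply Rmult_le_compat; lra).
    lra. }
  lra.
Qed.

Lemma ancestor_0 (c : cell) : ancestor c 0 = c.
Proof.
  destruct c as [[d a] b]. unfold ancestor, cdepth, cx, cy; cbn -[Z.div].
  now rewrite Nat.sub_0_r, !Z.div_1_r.
Qed.

Lemma ancestor_1 (d : nat) (a b : Z) :
  ancestor (S d, a, b) 1 = (d, (a / 2)%Z, (b / 2)%Z).
Proof. unfold ancestor, cdepth, cx, cy; cbn -[Z.div]. now rewrite Nat.sub_0_r. Qed.

Lemma IZR_div2_bounds (a : Z) : 2 * IZR (a / 2) <= IZR a <= 2 * IZR (a / 2) + 1.
Proof.
  pose proof (Z.div_mod a 2 ltac:(lia)). pose proof (Z.mod_pos_bound a 2 ltac:(lia)).
  rewrite <- mult_IZR, <- plus_IZR. split; apply IZR_le; lia.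
Qed.

Lemma corner_in_parent (D : R) (d : nat) (a b : Z) : 0 <= D ->
  in_cell D (d, (a / 2)%Z, (b / 2)%Z) (IZR a * (D / 2 ^ S d), IZR b * (D / 2 ^ S d)).
Proof.
  intros HD. unfold in_cell, cside, cdepth, cx, cy; cbn [fst snd pow].
  assert (Hp : 0 < 2 ^ d) by (apply pow_lt; lra).
  set (s := D / (2 * 2 ^ d)).
  assert (Hs : 0 <= s)
    by (unfold s; apply Rmult_le_pos; [lra | left; apply Rinv_0_lt_compat; lra]).
  replace (D / 2 ^ d) with (2 * s) by (unfold s; field; lra).
  pose proof (IZR_div2_bounds a). pose proof (IZR_div2_bounds b).
  repeat split; nra.
Qed.

Lemma splits_near_point (n m : nat) (P : nat -> pt) (delta D : R) (c : cell) :
  0 < delta <= 1 -> splits n m P delta D c ->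
  exists i, (i < n)%nat /\
    (forall z, in_cell D c z -> dist z (P i) < 4 * cside D c / delta) /\
    delta / sqrt (INR n * INR m) < 4 * cside D c / delta.
Proof.
  intros Hdelta [Hfar (i & Hi & x & y & Hx & Hy & Hratio)].
  assert (Hdiam : forall u v, in_cell D c u -> in_cell D c v -> dist u v <= 2 * cside D c)
    by (intros; apply in_cell_dist_le; assumption).
  set (s := cside D c) in *. set (r := 4 * s / delta).
  assert (Hr : delta * r = 4 * s) by (unfold r; field; lra).
  assert (Hs : 0 <= s) by (pose proof (dist_ge0 x y); pose proof (Hdiam x y Hx Hy); lra).
  assert (Hx_close : delta * dist x (P i) < 2 * s).
  { pose proof (dist_triangle y x (P i)). pose proof (Hdiam y x Hy Hx). nra. }
  assert (Hnear : forall z, in_cell D c z -> dist z (P i) < r).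
  { intros z Hz. apply (Rmult_lt_reg_l delta); [lra|]. rewrite Hr.
    pose proof (dist_triangle z x (P i)). pose proof (Hdiam z x Hz Hx).
    nra. }
  exists i. split; [exact Hi|]. split; [exact Hnear|].
  destruct (Rlt_or_le (delta / sqrt (INR n * INR m)) r) as [Hlt | Hle]; [exact Hlt|].
  exfalso. apply Hfar. exists i. split; [exact Hi|].
  intros z Hz. pose proof (Hnear z Hz). lra.
Qed.

Definition window (u : R) (K : nat) : list Z :=
  map (fun k => (up u - 1 + Z.of_nat k)%Z) (seq 0 K).

Lemma length_window (u : R) (K : nat) : length (window u K) = K.
Proof. unfold window. now rewrite length_map, length_seq. Qed.

Lemma In_window (u : R) (K : nat) (a : Z) :
  u <= IZR a <= u + INR K - 1 -> In a (window u K).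
Proof.
  intros [Hlo Hhi]. destruct (archimed u) as [Hup1 Hup2].
  assert (Hstart : (up u - 1 <= a)%Z) by (apply le_IZR; rewrite minus_IZR; simpl; lra).
  assert (Hend : (a < up u - 1 + Z.of_nat K)%Z).
  { apply lt_IZR. rewrite plus_IZR, minus_IZR, <- INR_IZR_INZ. simpl. lra. }
  apply in_map_iff. exists (Z.to_nat (a - (up u - 1))). split.
  - rewrite Z2Nat.id; lia.
  - apply in_seq. lia.
Qed.

Lemma In_window_near (x s rho : R) (K : nat) (a : Z) :
  0 < s -> Rabs (IZR a * s - x) <= rho * s -> 2 * rho + 1 <= INR K ->
  In a (window (x / s - rho) K).
Proof.
  intros Hs Ha HK.
  assert (Hle := Rle_abs (IZR a * s - x)). assert (Hge := Rle_abs (- (IZR a * s - x))).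
  rewrite Rabs_Ropp in Hge.
  assert (Hx : x / s * s = x) by (field; lra).
  apply In_window. split; apply (Rmult_le_reg_r s); nra.
Qed.

Definition grid_near (d : nat) (p : pt) (s rho : R) (K : nat) : list cell :=
  flat_map (fun a => map (fun b => (d, a, b)) (window (snd p / s - rho) K))
    (window (fst p / s - rho) K).

Lemma length_grid_near (d : nat) (p : pt) (s rho : R) (K : nat) :
  length (grid_near d p s rho K) = (K * K)%nat.
Proof.
  unfold grid_near. rewrite (flat_map_constant_length (c := K)), length_window; [easy|].
  intros a _. now rewrite length_map, length_window.
Qed.

Lemma In_grid_near (d : nat) (p : pt) (s rho : R) (K : nat) (a b : Z) :
  0 < s -> Rabs (IZR a * s - fst p) <= rho * s -> Rabs (IZR b * s - snd p) <= rho * s ->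
  2 * rho + 1 <= INR K -> In (d, a, b) (grid_near d p s rho K).
Proof.
  intros Hs Ha Hb HK. apply in_flat_map. exists a. split.
  - now apply In_window_near.
  - apply in_map. now apply In_window_near.
Qed.

Lemma depth_lt_of_split_bound (N delta Delta : R) (d J : nat) :
  0 < N -> 0 < delta -> 0 < Delta ->
  delta / sqrt N < 4 * (Delta / 2 ^ d) / delta ->
  4 * Delta * sqrt N / delta ^ 2 <= 2 ^ J -> (d < J)%nat.
Proof.
  intros HN Hdelta HDelta Hsplit HJ.
  destruct (Nat.lt_ge_cases d J) as [Hlt | Hge]; [exact Hlt | exfalso].
  assert (Hq : 0 < sqrt N) by (apply sqrt_lt_R0; lra).
  assert (Hp : 0 < 2 ^ d) by (apply pow_lt; lra).
  assert (Hpow : 2 ^ J <= 2 ^ d) by (apply Rle_pow; [lra | exact Hge]).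
  assert (Hk : 0 < sqrt N * 2 ^ d * delta) by (repeat apply Rmult_lt_0_compat; assumption).
  apply (Rmult_lt_compat_r _ _ _ Hk) in Hsplit.
  replace (delta / sqrt N * (sqrt N * 2 ^ d * delta)) with (delta ^ 2 * 2 ^ d) in Hsplit
    by (field; lra).
  replace (4 * (Delta / 2 ^ d) / delta * (sqrt N * 2 ^ d * delta)) with (4 * Delta * sqrt N)
    in Hsplit by (field; lra).
  apply (Rmult_le_compat_r (delta ^ 2)) in HJ; [|apply pow2_ge_0].
  replace (4 * Delta * sqrt N / delta ^ 2 * delta ^ 2) with (4 * Delta * sqrt N) in HJ
    by (field; lra).
  nra.
Qed.

Lemma cell_corner_near (D : R) (c : cell) (x : pt) : in_cell D c x ->
  Rabs (IZR (cx c) * cside D c - fst x) <= cside D c /\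
  Rabs (IZR (cy c) * cside D c - snd x) <= cside D c.
Proof. intros [Hx Hy]. split; apply Rabs_le; lra. Qed.

Section Counting.

Variables (n m : nat) (P : nat -> pt) (tris : nat -> tri) (delta Delta : R).
Hypothesis Hdelta : 0 < delta <= 1.
Hypothesis HDelta : 0 < Delta.
Hypothesis Hm : (0 < m)%nat.
Hypothesis Hlong : forall t, (t < m)%nat -> longest_edge (tris t) <= Delta.

Definition root_candidates : list cell :=
  flat_map (fun t => grid_near 0 (tA (tris t)) Delta 2 5) (seq 0 m).

Definition split_candidates (J K : nat) : list cell :=
  flat_map (fun i => flat_map (fun d => grid_near (S d) (P i) (Delta / 2 ^ S d) (8 / delta) K)
                       (seq 0 J))
    (seq 0 n).

Lemma length_root_candidates : length root_candidates = (m * 25)%nat.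
Proof.
  unfold root_candidates. rewrite (flat_map_constant_length (c := 25%nat)), length_seq; [easy|].
  intros t _. apply length_grid_near.
Qed.

Lemma length_split_candidates (J K : nat) :
  length (split_candidates J K) = (n * (J * (K * K)))%nat.
Proof.
  unfold split_candidates.
  rewrite (flat_map_constant_length (c := (J * (K * K))%nat)), length_seq; [easy|].
  intros i _. rewrite (flat_map_constant_length (c := (K * K)%nat)), length_seq; [easy|].
  intros d _. apply length_grid_near.
Qed.

Lemma kept_in_root_candidates (c : cell) : kept m tris Delta c -> In c root_candidates.
Proof.
  destruct c as [[d a] b]. intros [Hd (t & x & Ht & Htri & Hx)]. cbn in Hd; subst d.
  destruct (in_triangle_near_vertex _ _ _ (Hlong t Ht) Htri) as [HAx HAy].
  destruct (cell_corner_near _ _ _ Hx) as [Hcx Hcy].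
  replace (cside Delta (0%nat, a, b)) with Delta in Hcx, Hcy by (unfold cside; simpl; field).
  apply in_flat_map. exists t. split; [apply in_seq; lia|].
  apply In_grid_near; [lra | | | simpl; lra].
  - apply (Rle_trans _ _ _ (Rabs_sub_triang _ (fst x) _)). cbn in Hcx. lra.
  - apply (Rle_trans _ _ _ (Rabs_sub_triang _ (snd x) _)). cbn in Hcy. lra.
Qed.

Lemma splits_in_split_candidates (J K d : nat) (a b : Z) :
  4 * Delta * sqrt (INR n * INR m) / delta ^ 2 <= 2 ^ J -> 16 / delta + 1 <= INR K ->
  splits n m P delta Delta (d, (a / 2)%Z, (b / 2)%Z) -> In (S d, a, b) (split_candidates J K).
Proof.
  intros HJ HK Hsplit.
  destruct (splits_near_point _ _ _ _ _ _ Hdelta Hsplit) as (i & Hi & Hnear & Hfar).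
  unfold cside, cdepth in Hnear, Hfar; cbn [fst] in Hnear, Hfar.
  set (s := Delta / 2 ^ S d).
  assert (Hs : 0 < s) by (apply Rdiv_lt_0_compat; [lra | apply pow_lt; lra]).
  assert (Hparent : 4 * (Delta / 2 ^ d) / delta = 8 / delta * s)
    by (unfold s; cbn [pow]; field; split; try lra; apply pow_nonzero; lra).
  assert (Hn : (0 < n)%nat) by lia.
  assert (HdJ : (d < J)%nat).
  { apply (depth_lt_of_split_bound (INR n * INR m) delta Delta);
      [| lra | exact HDelta | exact Hfar | exact HJ].
    apply Rmult_lt_0_compat; apply lt_0_INR; assumption. }
  specialize (Hnear _ (corner_in_parent Delta d a b ltac:(lra))). fold s in Hnear.
  rewrite Hparent in Hnear.
  apply in_flat_map. exists i. split; [apply in_seq; lia|].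
  apply in_flat_map. exists d. split; [apply in_seq; lia|].
  fold s. apply In_grid_near; [exact Hs | | | lra].
  - pose proof (Rabs_fst_le_dist (IZR a * s, IZR b * s) (P i)). cbn [fst] in *. lra.
  - pose proof (Rabs_snd_le_dist (IZR a * s, IZR b * s) (P i)). cbn [snd] in *. lra.
Qed.

Lemma inQ_length_le (J K : nat) (l : list cell) :
  4 * Delta * sqrt (INR n * INR m) / delta ^ 2 <= 2 ^ J -> 16 / delta + 1 <= INR K ->
  NoDup l -> (forall c, In c l -> inQ n m P tris delta Delta c) ->
  (length l <= 25 * m + n * (J * (K * K)))%nat.
Proof.
  intros HJ HK Hl HQ.
  transitivity (length (root_candidates ++ split_candidates J K)).
  - apply NoDup_incl_length; [exact Hl|].
    intros [[d a] b] Hc. apply in_or_app.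
    destruct (HQ _ Hc) as [Hkept [Hsplit _]]. destruct d as [|d].
    + left. rewrite ancestor_0 in Hkept. exact (kept_in_root_candidates _ Hkept).
    + right. apply splits_in_split_candidates; [exact HJ | exact HK |].
      rewrite <- ancestor_1. apply Hsplit. cbn. lia.
  - rewrite length_app, length_root_candidates, length_split_candidates. lia.
Qed.

End Counting.

Lemma exists_nat_between (u : R) : 0 <= u -> exists k : nat, u < INR k <= u + 1.
Proof.
  intros Hu. destruct (archimed u) as [Hup1 Hup2].
  assert (Hup : (0 <= up u)%Z) by (apply le_IZR; lra).
  exists (Z.to_nat (up u)). rewrite INR_IZR_INZ, Z2Nat.id by exact Hup. lra.
Qed.

Lemma exists_pow2_ge (Y : R) : 1 <= Y -> exists J : nat, Y <= 2 ^ J /\ INR J <= 2 * ln Y + 1.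
Proof.
  intros HY.
  assert (HlnY : 0 <= ln Y).
  { destruct HY as [HY | <-]; [| rewrite ln_1; lra].
    rewrite <- ln_1. left. apply ln_increasing; lra. }
  destruct (exists_nat_between (2 * ln Y)) as (J & HJlo & HJhi); [lra|].
  exists J. split; [| exact HJhi].
  destruct (Rle_or_lt Y (2 ^ J)) as [Hle | Hlt]; [exact Hle | exfalso].
  apply ln_increasing in Hlt; [| apply pow_lt; lra].
  rewrite ln_pow in Hlt by lra.
  pose proof ln_lt_2. nra.
Qed.

Lemma ln_ge_quarter (x : R) : 0 < x -> 2 <= x ^ 2 -> 1 / 4 <= ln x.
Proof.
  intros Hx Hx2.
  assert (Hln : ln 2 <= ln (x ^ 2)).
  { destruct Hx2 as [Hlt | <-]; [left; apply ln_increasing; lra | lra]. }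
  rewrite ln_pow in Hln by exact Hx. pose proof ln_lt_2. simpl in Hln. lra.
Qed.

Lemma sumR_eq_1_pos (k : nat) (f : nat -> R) : sumR k f = 1 -> (0 < k)%nat.
Proof. destruct k as [|k]; [unfold sumR; simpl; lra | lia]. Qed.

Lemma sumR_le_const (k : nat) (f : nat -> R) (c : R) :
  (forall t, (t < k)%nat -> f t <= c) -> sumR k f <= INR k * c.
Proof.
  unfold sumR. rewrite <- (length_seq k 0) at 2. intros Hf.
  assert (Hseq : forall t, In t (seq 0 k) -> f t <= c)
    by (intros t Ht; apply in_seq in Ht; apply Hf; lia).
  clear Hf. induction (seq 0 k) as [|t ts IH]; cbn [map fold_right length].
  - simpl. lra.
  - rewrite S_INR. pose proof (Hseq t (or_introl eq_refl)).
    pose proof (IH (fun u Hu => Hseq u (or_intror Hu))). lra.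
Qed.

Lemma longest_edge_ge0 (t : tri) : 0 <= longest_edge t.
Proof. exact (Rle_trans _ _ _ (dist_ge0 _ _) (dist_AB_le_longest_edge t)). Qed.

Lemma Rinv_ge_1 (x : R) : 0 < x <= 1 -> 1 <= / x.
Proof. intros Hx. rewrite <- Rinv_1. apply Rinv_le_contravar; lra. Qed.

Lemma unit_area_bounds (m : nat) (S : nat -> tri) (Delta : R) :
  sumR m (fun t => tri_area (S t)) = 1 ->
  (forall t, (t < m)%nat -> longest_edge (S t) <= Delta) ->
  (0 < m)%nat /\ 2 <= INR m * Delta ^ 2 /\ 0 < Delta.
Proof.
  intros Harea Hlong.
  assert (Hm := sumR_eq_1_pos _ _ Harea).
  assert (HmD : 2 <= INR m * Delta ^ 2).
  { enough (sumR m (fun t => tri_area (S t)) <= INR m * (Delta ^ 2 / 2)) by lra.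
    apply sumR_le_const. intros t Ht. exact (tri_area_le _ _ (Hlong t Ht)). }
  split; [exact Hm|]. split; [exact HmD|].
  destruct (Rle_lt_or_eq _ _ (Rle_trans _ _ _ (longest_edge_ge0 (S 0%nat)) (Hlong 0%nat Hm)))
    as [Hpos | Hzero]; [exact Hpos|].
  rewrite <- Hzero, pow_i, Rmult_0_r in HmD by lia. lra.
Qed.

Lemma log_arg_bounds (N M Delta delta : R) :
  1 <= N -> 1 <= M -> 2 <= M * Delta ^ 2 -> 0 < Delta -> 0 < delta <= 1 ->
  2 <= (N * M * Delta / delta) ^ 2 /\ 1 <= (N * M * Delta / delta) ^ 6 /\
  4 * Delta * sqrt (N * M) / delta ^ 2 <= (N * M * Delta / delta) ^ 6.
Proof.
  intros HN HM HMD HDelta Hdelta.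
  set (Z := N * M * Delta). set (X := Z / delta).
  assert (HZ2 : 2 <= Z ^ 2).
  { replace (Z ^ 2) with (N * N * M * (M * Delta ^ 2)) by (unfold Z; ring).
    assert (1 <= N * N * M) by (assert (1 <= N * N) by nra; nra). nra. }
  assert (HZ0 : 0 < Z) by (unfold Z; repeat apply Rmult_lt_0_compat; lra).
  assert (HZ : 1 <= Z) by nra.
  assert (HXZ : Z <= X).
  { pose proof (Rinv_ge_1 _ Hdelta). unfold X, Rdiv. nra. }
  assert (HX2 : 2 <= X ^ 2) by nra.
  split; [exact HX2|].
  assert (Hsqrt : sqrt (N * M) <= N * M).
  { assert (HNM : 1 <= N * M) by nra.
    rewrite <- (sqrt_pow2 (N * M)) at 2 by lra. apply sqrt_le_1_alt. nra. }
  assert (H4X2 : 4 * Delta * sqrt (N * M) / delta ^ 2 <= 4 * X ^ 2).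
  { assert (HZZ : Delta * sqrt (N * M) <= Z * Z).
    { apply (Rmult_le_compat_l Delta) in Hsqrt; [|lra].
      replace (Delta * (N * M)) with Z in Hsqrt by (unfold Z; ring). nra. }
    replace (4 * X ^ 2) with (4 * (Z * Z) / delta ^ 2) by (unfold X; field; lra).
    unfold Rdiv. apply Rmult_le_compat_r; [apply Rlt_le, Rinv_0_lt_compat, pow_lt; lra | lra]. }
  replace (X ^ 6) with (X ^ 2 * (X ^ 2 * X ^ 2)) by ring.
  assert (HX4 : 4 <= X ^ 2 * X ^ 2) by nra. split; nra.
Qed.

Lemma candidate_count_le (N M delta L J K : R) :
  1 <= N -> 1 <= M -> 0 < delta <= 1 -> 1 / 4 <= L ->
  0 <= J <= 12 * L + 1 -> 0 <= K <= 18 / delta ->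
  25 * M + N * (J * (K * K)) <= 6000 * (N * M / delta ^ 2) * L.
Proof.
  intros HN HM Hdelta HL HJ HK.
  set (e := / delta) in *.
  assert (He : 1 <= e) by (apply Rinv_ge_1; exact Hdelta).
  replace (N * M / delta ^ 2) with (N * M * e * e) by (unfold e; field; lra).
  replace (18 / delta) with (18 * e) in HK by (unfold e; field; lra).
  assert (HKK : K * K <= 324 * (e * e)) by nra.
  assert (HJKK : J * (K * K) <= 16 * L * (324 * (e * e))) by (apply Rmult_le_compat; nra).
  assert (HNe : 1 <= N * e * e) by nra.
  assert (HL0 : 0 <= N * e * e * L) by nra.
  assert (Hroots : 25 * M <= 100 * (N * M * e * e) * L).
  { assert (25 * M <= 100 * M * L) by nra.
    assert (M * L <= M * L * (N * e * e)) by nra. nra. }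
  assert (Hsplits : N * (J * (K * K)) <= 5184 * (N * M * e * e) * L).
  { apply (Rmult_le_compat_l N) in HJKK; [|lra]. nra. }
  lra.
Qed.

Theorem lemma9 :
  exists C : R, 0 < C /\
  forall (n m : nat) (P : nat -> pt) (w : nat -> R) (S : nat -> tri)
         (Delta delta : R),
    (* P = {p_1..p_n}: n distinct weighted points, total weight 1 *)
    (forall i j, (i < n)%nat -> (j < n)%nat -> P i = P j -> i = j) ->
    (forall i, (i < n)%nat -> 0 <= w i) ->
    sumR n w = 1 ->
    (* S = {s_1..s_m}: m distinct triangles of total area 1 *)
    (forall i j, (i < m)%nat -> (j < m)%nat -> S i = S j -> i = j) ->
    sumR m (fun t => tri_area (S t)) = 1 ->
    (* Delta = longest edge length among the triangles *)
    (forall t, (t < m)%nat -> longest_edge (S t) <= Delta) ->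
    (exists t, (t < m)%nat /\ longest_edge (S t) = Delta) ->
    0 < delta -> delta <= 1 ->
    (* every finite family of distinct cells of Q has at most the bound *)
    forall l : list cell, NoDup l ->
      (forall c, In c l -> inQ n m P S delta Delta c) ->
      INR (length l) <=
        C * (INR n * INR m / delta ^ 2) * ln (INR n * INR m * Delta / delta).
Proof.
  exists 6000. split; [lra|].
  intros n m P w S Delta delta _ _ Hw _ Harea Hlong _ Hdelta0 Hdelta1 l Hl HQ.
  assert (HN : 1 <= INR n) by (apply (le_INR 1), sumR_eq_1_pos with w, Hw).
  destruct (unit_area_bounds m S Delta Harea Hlong) as (Hm & HmD & HDelta).
  assert (HM : 1 <= INR m) by (apply (le_INR 1); lia).
  destruct (log_arg_bounds _ _ _ _ HN HM HmD HDelta (conj Hdelta0 Hdelta1))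
    as (HX2 & HX1 & HX6).
  set (X := INR n * INR m * Delta / delta) in *.
  assert (HX : 0 < X)
    by (unfold X; apply Rdiv_lt_0_compat; [repeat apply Rmult_lt_0_compat |]; lra).
  destruct (exists_pow2_ge (X ^ 6) HX1) as (J & HJ & HJle).
  rewrite ln_pow in HJle by exact HX.
  destruct (exists_nat_between (16 / delta + 1)) as (K & HK & HKle).
  { pose proof (Rdiv_lt_0_compat 16 delta ltac:(lra) Hdelta0). lra. }
  pose proof (inQ_length_le n m P S delta Delta (conj Hdelta0 Hdelta1) HDelta Hm Hlong J K l
                (Rle_trans _ _ _ HX6 HJ) (Rlt_le _ _ HK) Hl HQ) as Hlen.
  apply le_INR in Hlen. rewrite plus_INR, !mult_INR in Hlen.
  replace (INR 25) with 25 in Hlen by (simpl; lra).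
  apply (Rle_trans _ _ _ Hlen), candidate_count_le; try lra.
  - apply ln_ge_quarter; assumption.
  - split; [apply pos_INR | simpl in HJle; lra].
  - split; [apply pos_INR|]. pose proof (Rinv_ge_1 delta (conj Hdelta0 Hdelta1)).
    unfold Rdiv in *. lra.
Qed.
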